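(* Let $L$ and $L_1$ be linear partial differential operators in $\mathbb{R}^n$ connected by an Intertwining Laplace Transformation, i.e. there exist differential operators $X_1, X_2, H \in \mathbf{F}[D_{x_1},\ldots,D_{x_n}]$ with $H\neq 0$ such that $L = X_1X_2 - H$, the element $\omega = -[X_2,H]H^{-1}$ of the skew Ore field $\mathbf{F}(D_{x_1},\ldots,D_{x_n})$ is a differential operator (belongs to $\mathbf{F}[D_{x_1},\ldots,D_{x_n}]$), and $L_1 = X_2X_1 + \omega X_1 - H$. Then the principal symbols of $L$ and $L_1$ coincide, $\mathrm{Sym}\, L = \mathrm{Sym}\, L_1$ (even if $\mathrm{ord}\, H \geq \mathrm{ord}\, L$).
   Context: $\mathbf{F}$ is a differential field of functions of $x_1,\ldots,x_n$ (differentially closed, large enough), $\mathbf{F}[D_{x_1},\ldots,D_{x_n}]$ is the ring of linear partial differential operators with coefficients in $\mathbf{F}$, and $\mathbf{F}(D_{x_1},\ldots,D_{x_n})$ is its skew Ore field of formal fractions $P^{-1}Q$ (with $P^{-1}Q\sim K^{-1}N$ iff $SP=TK$, $SQ=TN$ for some nonzero $S,T$); the order of $P^{-1}Q$ is $\mathrm{ord}\,Q-\mathrm{ord}\,P$. $[A,B]=AB-BA$. $\mathrm{Sym}$ denotes the principal symbol (highest-order part, as a polynomial in commuting variables $\xi_i$ corresponding to $D_{x_i}$). *)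

(* with multinomials' mpoly as the carrier of differential
   operators: an operator  P = \sum_alpha p_alpha D^alpha  (coefficients written
   on the LEFT) is represented by the multivariate polynomial
   \sum_alpha p_alpha 'X_[alpha] in {mpoly F[n]}; the (non-commutative)
   composition of operators is [dmul] below, the additive structure is the one
   of {mpoly F[n]}. *)
From HB Require Import structures.
From mathcomp Require Import all_boot all_order all_algebra.
From mathcomp Require Import mpoly.
Set Implicit Arguments. Unset Strict Implicit. Unset Printing Implicit Defensive.
Import Order.TTheory GRing.Theory.
Local Open Scope ring_scope.

Section DiffOps.
Variables (F : fieldType) (n : nat) (d : 'I_n -> F -> F).
(* d i is the derivation  d/dx_i  of the differential field F *)

Definition dcoef (i : 'I_n) (Q : {mpoly F[n]}) : {mpoly F[n]} :=
  \sum_(m <- msupp Q) d i Q@_m *: 'X_[m].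

(* left composition with D_{x_i}:  D_i o (q D^b) = (d_i q) D^b + q D^(b+e_i) *)
Definition dD (i : 'I_n) (Q : {mpoly F[n]}) : {mpoly F[n]} :=
  dcoef i Q + Q * 'X_i.

Definition dDpow (m : 'X_{1..n}) (Q : {mpoly F[n]}) : {mpoly F[n]} :=
  foldr (fun i acc => iter (m i) (dD i) acc) Q (enum 'I_n).

Definition dmul (P Q : {mpoly F[n]}) : {mpoly F[n]} :=
  \sum_(m <- msupp P) P@_m *: dDpow m Q.

(* principal symbol: the homogeneous part of top order, read as a polynomial
   in the commuting variables xi_i (= 'X_i) *)
Definition Sym (P : {mpoly F[n]}) : {mpoly F[n]} :=
  \sum_(m <- msupp P | mdeg m == (msize P).-1) P@_m *: 'X_[m].

End DiffOps.

From HB Require Import structures.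
From mathcomp Require Import all_boot all_order all_algebra.
From mathcomp Require Import mpoly.
From mathcomp Require Import zify ring.
Set Implicit Arguments. Unset Strict Implicit. Unset Printing Implicit Defensive.
Import GRing.Theory.
Local Open Scope ring_scope.

(* With A := X2 + omega the hypotheses give A o L = L1 o X2.  Composing two operators
   agrees with multiplying them as commutative polynomials up to terms of lower order;
   in particular a commutator drops the order by one, so omega, which satisfies
   omega o H = [H, X2], has order below that of X2.  Comparing A L with L1 X2 then shows
   that X2 (L - L1) has order below ord X2 + max (ord L, ord L1), i.e. L - L1 has order
   below that of L and L1, and their top-order parts coincide. *)

Section SuppSum.
Variables (F : fieldType) (n : nat).
Local Notation MP := {mpoly F[n]}.

Lemma big_msupp_sub (G : 'X_{1..n} -> MP) (p : MP) (s : seq 'X_{1..n}) :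
  uniq s -> {subset msupp p <= s} -> (forall m, m \notin msupp p -> G m = 0) ->
  \sum_(m <- msupp p) G m = \sum_(m <- s) G m.
Proof.
move=> us sub G0; symmetry.
rewrite (bigID (mem (msupp p))) /= [X in _ + X]big1 ?addr0; last by move=> m /G0.
rewrite -big_filter; apply: perm_big; apply: uniq_perm; rewrite ?filter_uniq ?msupp_uniq //.
by move=> m; rewrite mem_filter; case h: (m \in msupp p); rewrite //= (sub _ h).
Qed.

Definition supp_sum (f : F -> F) (g : 'X_{1..n} -> MP) (p : MP) : MP :=
  \sum_(m <- msupp p) f p@_m *: g m.

Lemma supp_sumE f g p s : f 0 = 0 -> uniq s -> {subset msupp p <= s} ->
  supp_sum f g p = \sum_(m <- s) f p@_m *: g m.
Proof.
move=> f0 us sub; apply: big_msupp_sub => // m /memN_msupp_eq0 ->.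
by rewrite f0 scale0r.
Qed.

Lemma supp_sum0 f g : supp_sum f g 0 = 0.
Proof. by rewrite /supp_sum msupp0 big_nil. Qed.

Section Additive.
Variable f : F -> F.
Hypothesis f_add : forall a b, f (a + b) = f a + f b.

Lemma supp_sumD g p q : supp_sum f g (p + q) = supp_sum f g p + supp_sum f g q.
Proof.
have f0 : f 0 = 0 by apply/(@addrI _ (f 0)); rewrite -f_add !addr0.
set s := undup (msupp p ++ msupp q ++ msupp (p + q)).
have sub r : {subset msupp r <= msupp p ++ msupp q ++ msupp (p + q)} ->
    supp_sum f g r = \sum_(m <- s) f r@_m *: g m.
  by move=> rs; apply: supp_sumE; rewrite ?undup_uniq // => m /rs; rewrite mem_undup.
rewrite !sub -?big_split /=; last 3 first.
- by move=> m h; rewrite !mem_cat h ?orbT.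
- by move=> m h; rewrite !mem_cat h ?orbT.
- by move=> m h; rewrite !mem_cat h ?orbT.
by apply: eq_bigr => m _; rewrite mcoeffD f_add scalerDl.
Qed.

Lemma supp_sumN g p : supp_sum f g (- p) = - supp_sum f g p.
Proof. by apply/eqP; rewrite -subr_eq0 opprK -supp_sumD addNr supp_sum0. Qed.

End Additive.

Lemma supp_sumZ g c p : supp_sum id g (c *: p) = c *: supp_sum id g p.
Proof.
rewrite (@supp_sumE id g (c *: p) (msupp p)) ?msupp_uniq //; last exact: msuppZ_le.
by rewrite scaler_sumr; apply: eq_bigr => m _ /=; rewrite mcoeffZ scalerA.
Qed.

Lemma supp_sumX g m : supp_sum id g 'X_[m] = g m.
Proof. by rewrite /supp_sum msuppX big_seq1 mcoeffX eqxx scale1r. Qed.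

Lemma supp_sum_lin (T : Type) g (r : seq T) (c : T -> F) (P : T -> MP) :
  supp_sum id g (\sum_(x <- r) c x *: P x) = \sum_(x <- r) c x *: supp_sum id g (P x).
Proof.
elim: r => [|a r IH]; first by rewrite !big_nil supp_sum0.
by rewrite !big_cons supp_sumD // supp_sumZ IH.
Qed.

End SuppSum.

Section Composition.
Variables (F : fieldType) (n : nat) (d : 'I_n -> F -> F).
Hypothesis d_add : forall i (a b : F), d i (a + b) = d i a + d i b.
Hypothesis d_leibniz : forall i (a b : F), d i (a * b) = d i a * b + a * d i b.
Hypothesis d_comm : forall i j (a : F), d i (d j a) = d j (d i a).
Local Notation MP := {mpoly F[n]}.

Lemma derivation0 i : d i 0 = 0.
Proof. by apply/(@addrI _ (d i 0)); rewrite -d_add !addr0. Qed.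

Lemma dcoefD i P Q : dcoef d i (P + Q) = dcoef d i P + dcoef d i Q.
Proof. exact: supp_sumD. Qed.

Lemma dcoefN i P : dcoef d i (- P) = - dcoef d i P.
Proof. exact: supp_sumN. Qed.

Lemma dcoef0 i : dcoef d i 0 = 0.
Proof. exact: supp_sum0. Qed.

Lemma dcoefZX i c m : dcoef d i (c *: 'X_[m]) = d i c *: 'X_[m].
Proof.
rewrite [LHS](@supp_sumE _ _ _ _ _ [:: m]) ?derivation0 //; last first.
  by move=> k /msuppZ_le; rewrite msuppX.
by rewrite big_seq1 mcoeffZ mcoeffX eqxx mulr1.
Qed.

Lemma dcoef_sum (T : Type) i (r : seq T) (c : T -> F) (h : T -> 'X_{1..n}) :
  dcoef d i (\sum_(x <- r) c x *: 'X_[h x]) = \sum_(x <- r) d i (c x) *: 'X_[h x].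
Proof.
elim: r => [|a r IH]; first by rewrite !big_nil dcoef0.
by rewrite !big_cons dcoefD dcoefZX IH.
Qed.

Lemma dcoefZ i c Q : dcoef d i (c *: Q) = d i c *: Q + c *: dcoef d i Q.
Proof.
rewrite [LHS](@supp_sumE _ _ _ _ _ (msupp Q)) ?derivation0 ?msupp_uniq //; last first.
  exact: msuppZ_le.
transitivity (\sum_(m <- msupp Q)
    (d i c *: (Q@_m *: 'X_[m]) + c *: (d i Q@_m *: 'X_[m]))).
  by apply: eq_bigr => m _; rewrite mcoeffZ d_leibniz scalerDl !scalerA.
by rewrite big_split -!scaler_sumr -mpolyE.
Qed.

Lemma dcoefMX i Q k : dcoef d i (Q * 'X_[k]) = dcoef d i Q * 'X_[k].
Proof.
rewrite {1}(mpolyE Q) mulr_suml.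
under eq_bigr do rewrite -scalerAl -mpolyXD.
rewrite dcoef_sum /dcoef mulr_suml.
by under [RHS]eq_bigr do rewrite -scalerAl -mpolyXD.
Qed.

Lemma dcoefC i j Q : dcoef d i (dcoef d j Q) = dcoef d j (dcoef d i Q).
Proof.
rewrite [dcoef d j Q]/dcoef [dcoef d i Q]/dcoef !dcoef_sum.
by apply: eq_bigr => m _; rewrite d_comm.
Qed.

Lemma dDD i P Q : dD d i (P + Q) = dD d i P + dD d i Q.
Proof. by rewrite /dD dcoefD mulrDl addrACA. Qed.

Lemma dDN i P : dD d i (- P) = - dD d i P.
Proof. by rewrite /dD dcoefN mulNr opprD. Qed.

Lemma dD0 i : dD d i 0 = 0.
Proof. by rewrite /dD dcoef0 mul0r addr0. Qed.

Lemma dDZ i c Q : dD d i (c *: Q) = d i c *: Q + c *: dD d i Q.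
Proof. by rewrite /dD dcoefZ -scalerAl scalerDr addrA. Qed.

Lemma dD_sum (T : Type) i (r : seq T) (G : T -> MP) :
  dD d i (\sum_(x <- r) G x) = \sum_(x <- r) dD d i (G x).
Proof. exact: (big_morph _ (dDD i) (dD0 i)). Qed.

Lemma dDC i j Q : dD d i (dD d j Q) = dD d j (dD d i Q).
Proof.
rewrite /dD !dcoefD !dcoefMX dcoefC !mulrDl -!addrA; congr (_ + _).
by rewrite addrCA (mulrAC Q).
Qed.

(* [dDpow] applies the [D_i] in the fixed order [enum 'I_n]; [dDC] lets us move any of them to the front. *)
Definition dDpow_seq (s : seq 'I_n) (m : 'X_{1..n}) (Q : MP) : MP :=
  foldr (fun i acc => iter (m i) (dD d i) acc) Q s.

Lemma dDpow_seqU m i s Q : uniq s ->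
  dDpow_seq s (m + U_(i))%MM Q = if i \in s then dD d i (dDpow_seq s m Q) else dDpow_seq s m Q.
Proof.
have iter_dDC j k R : iter k (dD d j) (dD d i R) = dD d i (iter k (dD d j) R).
  by elim: k => //= k ->; rewrite dDC.
elim: s => [|a s IH] //= /andP [as_ us]; rewrite in_cons IH // mnmDE mnm1E.
have [->|ne] /= := eqVneq i a; first by rewrite (negbTE as_) addn1.
by rewrite addn0; case: (i \in s); rewrite ?iter_dDC.
Qed.

Lemma dDpowU m i Q : dDpow d (m + U_(i))%MM Q = dD d i (dDpow d m Q).
Proof. by rewrite [LHS](@dDpow_seqU _ _ (enum 'I_n)) ?enum_uniq // mem_enum. Qed.

Lemma dDpowB m : {morph dDpow d m : P Q / P - Q}.
Proof.
move=> P Q; rewrite /dDpow; elim: (enum 'I_n) => //= a s ->.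
by elim: (m a) => //= k ->; rewrite dDD dDN.
Qed.

Lemma dmulDl P P' Q : dmul d (P + P') Q = dmul d P Q + dmul d P' Q.
Proof.
change (supp_sum id (dDpow d ^~ Q) (P + P')
  = supp_sum id (dDpow d ^~ Q) P + supp_sum id (dDpow d ^~ Q) P').
exact: supp_sumD.
Qed.

Lemma dmulNl P Q : dmul d (- P) Q = - dmul d P Q.
Proof.
change (supp_sum id (dDpow d ^~ Q) (- P) = - supp_sum id (dDpow d ^~ Q) P).
exact: supp_sumN.
Qed.

Lemma dmulBl P P' Q : dmul d (P - P') Q = dmul d P Q - dmul d P' Q.
Proof. by rewrite dmulDl dmulNl. Qed.

Lemma dmulBr P Q Q' : dmul d P (Q - Q') = dmul d P Q - dmul d P Q'.
Proof. by rewrite /dmul -sumrB; apply: eq_bigr => m _; rewrite dDpowB scalerBr. Qed.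

Lemma dmul0l Q : dmul d 0 Q = 0.
Proof. by rewrite /dmul msupp0 big_nil. Qed.

Lemma dmul0r P : dmul d P 0 = 0.
Proof. by have := dmulBr P 0 0; rewrite !subrr. Qed.

Lemma dmulXl m Q : dmul d 'X_[m] Q = dDpow d m Q.
Proof. exact: (supp_sumX (dDpow d ^~ Q)). Qed.

Lemma dmul_suml (T : Type) (r : seq T) (c : T -> F) (P : T -> MP) Q :
  dmul d (\sum_(x <- r) c x *: P x) Q = \sum_(x <- r) c x *: dmul d (P x) Q.
Proof. exact: (supp_sum_lin (dDpow d ^~ Q)). Qed.

Lemma dD_dmul i P Q : dD d i (dmul d P Q) = dmul d (dD d i P) Q.
Proof.
rewrite {1}/dmul dD_sum.
under eq_bigr do rewrite dDZ -dDpowU.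
rewrite big_split /= [dD d i P]/dD dmulDl; congr (_ + _).
  by rewrite [dcoef d i P]/dcoef dmul_suml; under [RHS]eq_bigr do rewrite dmulXl.
rewrite [in P * _](mpolyE P) mulr_suml.
under [in RHS]eq_bigr do rewrite -scalerAl -mpolyXD.
by rewrite dmul_suml; under [RHS]eq_bigr do rewrite dmulXl.
Qed.

Lemma dmulA A B C : dmul d (dmul d A B) C = dmul d A (dmul d B C).
Proof.
have dDpow_dmul m P Q : dDpow d m (dmul d P Q) = dmul d (dDpow d m P) Q.
  rewrite /dDpow; elim: (enum 'I_n) => //= a s ->.
  by elim: (m a) => //= k ->; rewrite dD_dmul.
rewrite [dmul d A B]/dmul dmul_suml [dmul d A _]/dmul; apply: eq_bigr => m _.
by rewrite dDpow_dmul.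
Qed.

Lemma dmul_intertwine X1 X2 H w : dmul d w H = dmul d H X2 - dmul d X2 H ->
  dmul d (X2 + w) (dmul d X1 X2 - H) = dmul d (dmul d X2 X1 + dmul d w X1 - H) X2.
Proof.
move=> commutator; rewrite dmulBr -dmulA dmulBl -dmulDl.
by rewrite [dmul d (X2 + w) H]dmulDl commutator (addrC (dmul d X2 H)) subrK.
Qed.

End Composition.

Section Order.
Variables (F : fieldType) (n : nat).
Local Notation MP := {mpoly F[n]}.

Lemma msize_poly_gt0 (p : MP) : (0 < msize p)%N = (p != 0).
Proof. by rewrite lt0n (mmeasure_poly_eq0 mdeg). Qed.

Lemma msize_mul_leq (p q : MP) : (msize (p * q) <= (msize p + msize q).-1)%N.
Proof.
have [->|p0] := eqVneq p 0; first by rewrite mul0r msize0.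
have [->|q0] := eqVneq q 0; first by rewrite mulr0 msize0.
by rewrite msizeM.
Qed.

Lemma msizeB_le (p q : MP) : (msize (p - q) <= maxn (msize p) (msize q))%N.
Proof. by rewrite (leq_trans (msizeD_le _ _)) // msizeN. Qed.

Lemma msize_addl (p q : MP) : (msize q < msize p)%N -> msize (p + q) = msize p.
Proof.
move=> qp; apply/eqP; rewrite eqn_leq; apply/andP; split.
  by rewrite (leq_trans (msizeD_le _ _)) // geq_max leqnn ltnW.
by have := msizeB_le (p + q) q; rewrite addrK; lia.
Qed.

Lemma Sym_eq_of_lower (P Q : MP) :
  (msize (P - Q) < maxn (msize P) (msize Q))%N -> Sym P = Sym Q.
Proof.
move=> low.
have eq_size : msize P = msize Q.
  apply/eqP; rewrite eqn_leq; apply/andP; split; rewrite leqNgt; apply/negP => lt.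
    by move: low; rewrite msize_addl ?msizeN // (maxn_idPl (ltnW lt)) ltnn.
  by move: low; rewrite addrC msize_addl ?msizeN // (maxn_idPr (ltnW lt)) ltnn.
rewrite /Sym -eq_size big_mkcond [RHS]big_mkcond /=.
set s := undup (msupp P ++ msupp Q).
have sub (R : MP) : {subset msupp R <= msupp P ++ msupp Q} ->
    \sum_(m <- msupp R) (if mdeg m == (msize P).-1 then R@_m *: 'X_[m] else 0)
  = \sum_(m <- s) (if mdeg m == (msize P).-1 then R@_m *: 'X_[m] else 0).
  move=> RPQ; apply: big_msupp_sub; first exact: undup_uniq.
    by move=> m /RPQ; rewrite mem_undup.
  by move=> m /memN_msupp_eq0 ->; rewrite scale0r if_same.
rewrite !sub => [|m mR|m mR]; [|by rewrite mem_cat mR ?orbT..].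
apply: eq_bigr => m _; case: eqP => // deg_m.
have : m \notin msupp (P - Q) by apply: msize_mdeg_ge; rewrite deg_m -eq_size maxnn in low *; lia.
by move/memN_msupp_eq0/eqP; rewrite mcoeffB subr_eq0 => /eqP ->.
Qed.

Variable d : 'I_n -> F -> F.

Lemma msize_dcoef i Q : (msize (dcoef d i Q) <= msize Q)%N.
Proof.
rewrite /dcoef (leq_trans (msize_sum _ _ _)) //; apply/bigmax_leqP_seq => m mQ _.
by rewrite (leq_trans (msizeZ_le _ _)) // msizeX msize_mdeg_lt.
Qed.

Definition principal_mul (T : MP -> MP) (M : MP) :=
  M != 0 /\ forall Q, (msize (T Q - M * Q) <= (msize M + msize Q).-2)%N.

Lemma principal_mul_comp T1 T2 M1 M2 : principal_mul T1 M1 -> principal_mul T2 M2 ->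
  principal_mul (T1 \o T2) (M1 * M2).
Proof.
move=> [M1_neq0 T1M1] [M2_neq0 T2M2]; split=> [|Q /=]; first exact: mulf_neq0.
have M1_gt0 : (0 < msize M1)%N by rewrite msize_poly_gt0.
have M2_gt0 : (0 < msize M2)%N by rewrite msize_poly_gt0.
rewrite msizeM //; set R := T2 Q - M2 * Q.
have -> : T1 (T2 Q) - M1 * M2 * Q = (T1 (T2 Q) - M1 * T2 Q) + M1 * R.
  by rewrite /R mulrBr addrA subrK mulrA.
have size_T2Q : (msize (T2 Q) <= (msize M2 + msize Q).-1)%N.
  rewrite -(subrK (M2 * Q) (T2 Q)) -/R (leq_trans (msizeD_le _ _)) // geq_max.
  by rewrite msize_mul_leq andbT (leq_trans (T2M2 Q)) ?leq_pred.
rewrite (leq_trans (msizeD_le _ _)) // geq_max; apply/andP; split.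
  (* [lia] would treat the [msize] of differently elaborated types as distinct atoms,
     so sizes are generalized to plain naturals first, here and below. *)
  rewrite (leq_trans (T1M1 _)) //; move: size_T2Q M1_gt0 M2_gt0.
  by move: (msize M1) (msize M2) (msize Q) (msize (T2 Q)) => a1 a2 q t; lia.
have [->|R_neq0] := eqVneq R 0; first by rewrite mulr0 msize0.
have := msize_mul_leq M1 R; have := T2M2 Q; rewrite -/R -msize_poly_gt0 in R_neq0.
move: R_neq0 M1_gt0 M2_gt0.
by move: (msize M1) (msize M2) (msize Q) (msize R) (msize (M1 * R)) => a1 a2 q r s; lia.
Qed.

Lemma principal_mul_id : principal_mul id 1.
Proof. by split=> [|Q]; rewrite ?oner_neq0 // mul1r subrr msize0. Qed.

Lemma principal_mul_dD i : principal_mul (dD d i) 'X_i.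
Proof.
split=> [|Q]; first by rewrite -msize_poly_gt0 msizeX.
by rewrite /dD mulrC addrK msizeX mdeg1 msize_dcoef.
Qed.

Lemma principal_mul_dDpow m : principal_mul (dDpow d m) 'X_[m].
Proof.
have iterP i k : principal_mul (iter k (dD d i)) ('X_i ^+ k).
  elim: k => [|k IH]; first exact: principal_mul_id.
  by rewrite exprS; apply: principal_mul_comp (principal_mul_dD i) IH.
rewrite mpolyXE_id -big_enum /dDpow /=; elim: (enum 'I_n) => [|i s IH].
  by rewrite big_nil; apply: principal_mul_id.
by rewrite big_cons; apply: principal_mul_comp (iterP _ _) IH.
Qed.

Lemma msize_dmul_sub_mul P Q : (msize (dmul d P Q - P * Q) <= (msize P + msize Q).-2)%N.
Proof.
have -> : dmul d P Q - P * Q = \sum_(m <- msupp P) P@_m *: (dDpow d m Q - 'X_[m] * Q).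
  rewrite [in P * Q](mpolyE P) mulr_suml /dmul -sumrB.
  by apply: eq_bigr => m _; rewrite scalerBr scalerAl.
rewrite (leq_trans (msize_sum _ _ _)) //; apply/bigmax_leqP_seq => m mP _.
rewrite (leq_trans (msizeZ_le _ _)) //.
have [_ /(_ Q)] := principal_mul_dDpow m; rewrite msizeX.
have := msize_mdeg_lt mP.
by move: (msize (dDpow d m Q - 'X_[m] * Q)) (msize P) (msize Q) (mdeg m) => r p q k; lia.
Qed.

Lemma msize_dmul P Q : P != 0 -> Q != 0 -> msize (dmul d P Q) = (msize P + msize Q).-1.
Proof.
move=> P_neq0 Q_neq0; rewrite -(subrK (P * Q) (dmul d P Q)) addrC msize_addl msizeM //.
have := msize_dmul_sub_mul P Q; rewrite -!msize_poly_gt0 in P_neq0 Q_neq0.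
by move: P_neq0 Q_neq0; move: (msize P) (msize Q) (msize (_ - _)) => p q r; lia.
Qed.

Lemma dmul_neq0 P Q : P != 0 -> Q != 0 -> dmul d P Q != 0.
Proof.
move=> P_neq0 Q_neq0; rewrite -msize_poly_gt0 msize_dmul //.
rewrite -!msize_poly_gt0 in P_neq0 Q_neq0.
by move: P_neq0 Q_neq0; move: (msize P) (msize Q) => p q; lia.
Qed.

Lemma msize_dmul_commutator P Q :
  (msize (dmul d P Q - dmul d Q P) <= (msize P + msize Q).-2)%N.
Proof.
have -> : dmul d P Q - dmul d Q P = (dmul d P Q - P * Q) - (dmul d Q P - Q * P).
  by rewrite (mulrC Q) opprB addrA subrK.
rewrite (leq_trans (msizeB_le _ _)) // geq_max msize_dmul_sub_mul addnC.
exact: msize_dmul_sub_mul.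
Qed.

Lemma msize_lt_of_dmul_commutator w X H : H != 0 -> X != 0 ->
  dmul d w H = dmul d H X - dmul d X H -> (msize w < msize X)%N.
Proof.
move=> H_neq0 X_neq0 commutator; have [->|w_neq0] := eqVneq w 0.
  by rewrite msize0 msize_poly_gt0.
have := msize_dmul_commutator H X; rewrite -commutator msize_dmul //.
rewrite -!msize_poly_gt0 in H_neq0 w_neq0.
by move: H_neq0 w_neq0; move: (msize w) (msize H) (msize X) => m h x; lia.
Qed.

Lemma Sym_eq_of_intertwined X w L L1 : X != 0 -> (msize w < msize X)%N ->
  dmul d (X + w) L = dmul d L1 X -> Sym L = Sym L1.
Proof.
move=> X_neq0 w_lt intertwined; have [->//|L_neq] := eqVneq L L1.
apply: Sym_eq_of_lower; set A := X + w in intertwined.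
set R1 := dmul d L1 X - L1 * X; set R2 := dmul d A L - A * L.
have lower : X * (L - L1) = R1 - R2 - w * L.
  by rewrite /R1 /R2 -intertwined /A; ring.
have size_A : msize A = msize X by rewrite msize_addl.
have D_gt0 : (0 < msize (L - L1))%N by rewrite msize_poly_gt0 subr_eq0.
have X_gt0 : (0 < msize X)%N by rewrite msize_poly_gt0.
have := msizeB_le (R1 - R2) (w * L); have := msizeB_le R1 R2.
rewrite -lower msizeM ?subr_eq0 //.
have := msize_dmul_sub_mul L1 X; have := msize_dmul_sub_mul A L; rewrite -/R1 -/R2 size_A.
have := msize_mul_leq w L; move: D_gt0 X_gt0 w_lt.
move: (msize (L - L1)) (msize X) (msize w) (msize L) (msize L1) => k x m l l1.
move: (msize R1) (msize R2) (msize (w * L)) (msize (R1 - R2)).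
by move: (msize (R1 - R2 - w * L)) => *; lia.
Qed.

End Order.

Theorem lemma1 (F : fieldType) (n : nat) (d : 'I_n -> F -> F)
  (d_add : forall i (a b : F), d i (a + b) = d i a + d i b)
  (d_leibniz : forall i (a b : F), d i (a * b) = d i a * b + a * d i b)
  (d_comm : forall i j (a : F), d i (d j a) = d j (d i a))
  (F_char0 : [pchar F] =i pred0)
  (L L1 X1 X2 H omega : {mpoly F[n]}) :
  H != 0 ->
  L = dmul d X1 X2 - H ->
  (* omega = -[X2,H] H^{-1} is a differential operator *)
  dmul d omega H = - (dmul d X2 H - dmul d H X2) ->
  L1 = dmul d X2 X1 + dmul d omega X1 - H ->
  Sym L = Sym L1.
Proof.
move=> H_neq0 defL; rewrite opprB => commutator defL1.
have [X2_0|X2_neq0] := eqVneq X2 0.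
  have omega_0 : omega = 0.
    have : dmul d omega H = 0 by rewrite commutator X2_0 dmul0l (dmul0r d_add) subrr.
    by apply: contra_eq => /dmul_neq0; apply.
  by rewrite defL defL1 X2_0 omega_0 !dmul0l (dmul0r d_add) !add0r.
apply: (Sym_eq_of_intertwined X2_neq0 (msize_lt_of_dmul_commutator H_neq0 X2_neq0 commutator)).
by rewrite defL defL1; apply: dmul_intertwine.
Qed.
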